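(* Let $\|\cdot\|$ be a norm on $\mathbb{R}^d$, $\epsilon>0$, and $A\subseteq\mathbb{R}^d$. Then $$A=(A^{-\epsilon})^\epsilon\sqcup F(A),\qquad (A^\epsilon)^{-\epsilon}=A\sqcup F(A^C),$$ where $\sqcup$ denotes disjoint union.
   Context: $\overline{B_\epsilon(\mathbf a)}=\{\mathbf z:\|\mathbf z-\mathbf a\|\le\epsilon\}$; $A^\epsilon=\bigcup_{\mathbf a\in A}\overline{B_\epsilon(\mathbf a)}$ ($=A\oplus\overline{B_\epsilon(\mathbf 0)}$) and $A^{-\epsilon}=((A^C)^\epsilon)^C$. For a set $S$, $F(S)=\{\mathbf x\in S:\text{every closed }\epsilon\text{-ball }\overline{B_\epsilon(\mathbf y)}\text{ containing }\mathbf x\text{ also intersects }S^C\}$. *)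

From HB Require Import structures.
From mathcomp Require Import all_boot all_order all_algebra.
From mathcomp Require Import boolp classical_sets reals.
Set Implicit Arguments. Unset Strict Implicit. Unset Printing Implicit Defensive.
Import Order.TTheory GRing.Theory Num.Theory.
Local Open Scope ring_scope.
Local Open Scope classical_set_scope.

Definition is_norm (R : realType) (d : nat) (N : 'rV[R]_d -> R) : Prop :=
  [/\ forall x, 0 <= N x,
      forall x, N x = 0 -> x = 0,
      forall (a : R) x, N (a *: x) = `|a| * N x &
      forall x y, N (x + y) <= N x + N y].

Definition cball (R : realType) (d : nat) (N : 'rV[R]_d -> R)
  (a : 'rV[R]_d) (e : R) : set 'rV[R]_d := [set z | N (z - a) <= e].

Definition thicken (R : realType) (d : nat) (N : 'rV[R]_d -> R)
  (e : R) (A : set 'rV[R]_d) : set 'rV[R]_d :=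
  \bigcup_(a in A) cball N a e.

Definition erode (R : realType) (d : nat) (N : 'rV[R]_d -> R)
  (e : R) (A : set 'rV[R]_d) : set 'rV[R]_d :=
  ~` thicken N e (~` A).

Definition Fset (R : realType) (d : nat) (N : 'rV[R]_d -> R)
  (e : R) (S : set 'rV[R]_d) : set 'rV[R]_d :=
  [set x | S x /\ forall y, cball N y e x -> cball N y e `&` ~` S !=set0].

From HB Require Import structures.
From mathcomp Require Import all_boot all_order all_algebra.
From mathcomp Require Import boolp classical_sets reals.
Import Order.TTheory GRing.Theory Num.Theory.
Local Open Scope ring_scope.
Local Open Scope classical_set_scope.

(* Since the balls are symmetric, [y] lies in [A^{-e}] exactly when the ball
   around [y] fits inside [A]; so [(A^{-e})^e] is the union of the balls
   contained in [A], and [F(A)] is what [A] has left outside that union.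
   The second decomposition is the first one applied to [~` A], because
   erosion and thickening are exchanged by complementation. *)

Lemma is_norm_oppr (R : realType) (d : nat) (N : 'rV[R]_d -> R) :
  is_norm N -> forall x, N (- x) = N x.
Proof. by case=> _ _ hom _ x; rewrite -scaleN1r hom normrN normr1 mul1r. Qed.

Section BallUnions.

Variables (R : realType) (d : nat) (N : 'rV[R]_d -> R) (e : R).
Hypothesis N_oppr : forall x, N (- x) = N x.

Lemma cballC (a z : 'rV[R]_d) : cball N a e z = cball N z e a.
Proof. by rewrite /cball /= -opprB N_oppr. Qed.

Lemma erodeP (A : set 'rV[R]_d) (y : 'rV[R]_d) :
  erode N e A y <-> cball N y e `<=` A.
Proof.
split=> [notT z yz | sub [a nAa ya]]; last by apply/nAa/sub; rewrite cballC.
by apply: contrapT => nAz; apply: notT; exists z => //; rewrite cballC.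
Qed.

Lemma thicken_erodeP (A : set 'rV[R]_d) (x : 'rV[R]_d) :
  thicken N e (erode N e A) x <->
  exists y, cball N y e x /\ cball N y e `<=` A.
Proof. by split=> [[y /erodeP sub yx] | [y [yx /erodeP Ey]]]; exists y. Qed.

Lemma thicken_erode_sub (A : set 'rV[R]_d) : thicken N e (erode N e A) `<=` A.
Proof. by move=> x /thicken_erodeP [y [yx sub]]; exact: sub. Qed.

Lemma FsetE (A : set 'rV[R]_d) : Fset N e A = A `\` thicken N e (erode N e A).
Proof.
apply/seteqP; split=> x [Ax hx]; split=> //.
  by move=> /thicken_erodeP [y [yx sub]]; have [z [/sub Az []]] := hx y yx.
move=> y yx; apply: contrapT => no_escape.
apply: hx; apply/thicken_erodeP; exists y; split=> // z yz.
by apply: contrapT => nAz; apply: no_escape; exists z.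
Qed.

Lemma erode_setC (A : set 'rV[R]_d) : erode N e (~` A) = ~` thicken N e A.
Proof. by rewrite /erode setCK. Qed.

Lemma erode_thickenE (A : set 'rV[R]_d) :
  erode N e (thicken N e A) = ~` thicken N e (erode N e (~` A)).
Proof. by rewrite erode_setC. Qed.

End BallUnions.

Theorem lemma20 (R : realType) (d : nat) (N : 'rV[R]_d -> R)
  (e : R) (A : set 'rV[R]_d) :
  is_norm N -> 0 < e ->
  (A = thicken N e (erode N e A) `|` Fset N e A /\
   thicken N e (erode N e A) `&` Fset N e A = set0) /\
  (erode N e (thicken N e A) = A `|` Fset N e (~` A) /\
   A `&` Fset N e (~` A) = set0).
Proof.
move=> /is_norm_oppr N_oppr _.
have sub_erode S := @thicken_erode_sub R d N e N_oppr S.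
rewrite !FsetE //; split; split.
- by rewrite setDUK.
- exact: setDIK.
- rewrite erode_thickenE -(setDUK (subsetCr (sub_erode (~` A)))).
  by rewrite !setDE setIC.
- by rewrite setDE setIA setICr set0I.
Qed.
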